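(* Let $x\in\mathbb{R}$, written as $x=k+\sum_{n=1}^\infty a_n2^{-n}$ with $k\in\mathbb{Z}$ and $a_n\in\{0,1\}$. (1) If $x\in D$, then $\partial^+T(x)=\varnothing$. (2) If $x\notin D$ and there exists an integer $m\ge1$ such that $a_n+a_{n+1}=1$ for all $n\ge m$, then $$\partial^+T(x)=\begin{cases} m-1-2\sum_{j=1}^{m-1}a_j+[0,1] & \text{if } a_m=0,\\ m-1-2\sum_{j=1}^{m-1}a_j+[-1,0] & \text{if } a_m=1.\end{cases}$$ (3) If $x\notin D$ does not satisfy the hypothesis of (2), but there exists $m\ge1$ such that $a_{m+2i}+a_{m+2i+1}=1$ for all $i\ge0$, then $$\partial^+T(x)=\Big\{m-1-2\sum_{j=1}^{m-1}a_j\Big\}.$$ (4) If $x\notin D$ satisfies neither the hypothesis of (2) nor that of (3), then $\partial^+T(x)=\varnothing$.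
   Context: Let $\phi(x)=\operatorname{dist}(x,\mathbb{Z})$ and $T(x)=\sum_{n=0}^\infty 2^{-n}\phi(2^nx)$ be the Takagi function. $D$ denotes the set of dyadic rationals $\{k/2^{j}:k\in\mathbb{Z},j\ge0\}$; for $x\notin D$ the binary expansion is unique. The Fréchet superdifferential of an upper semicontinuous $f:\mathbb{R}\to\mathbb{R}$ at $x$ is $\partial^+f(x)=\{\xi\in\mathbb{R}: \limsup_{h\to0}\frac{f(x+h)-f(x)-\xi h}{|h|}\le0\}$. For $c\in\mathbb{R}$ and an interval $I$, $c+I=\{c+t:t\in I\}$. *)

From Stdlib Require Import Reals Lra Lia ZArith ClassicalEpsilon.
Open Scope R_scope.

Definition floorR (x : R) : Z := (up x - 1)%Z.

Definition phi (x : R) : R :=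
  Rmin (x - IZR (floorR x)) (IZR (floorR x) + 1 - x).

Definition takagi_partial (x : R) (N : nat) : R :=
  sum_f_R0 (fun n => phi (2 ^ n * x) / 2 ^ n) N.

Definition T (x : R) : R :=
  epsilon (inhabits 0) (fun l => Un_cv (takagi_partial x) l).

Definition dyadic (x : R) : Prop :=
  exists (k : Z) (j : nat), x = IZR k / 2 ^ j.

(* Frechet superdifferential: xi in d^+ f(x) iff
   limsup_{h->0} (f(x+h) - f(x) - xi h)/|h| <= 0 *)
Definition superdiff (f : R -> R) (x xi : R) : Prop :=
  forall eps : R, eps > 0 -> exists delta : R, delta > 0 /\
    forall h : R, h <> 0 -> Rabs h < delta ->
      (f (x + h) - f x - xi * h) / Rabs h <= eps.

(* psum a n = a 1 + ... + a n *)
Fixpoint psum (a : nat -> R) (n : nat) : R :=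
  match n with
  | O => 0
  | S p => psum a p + a (S p)
  end.

Definition bin_partial (a : nat -> R) (N : nat) : R :=
  psum (fun n => a n / 2 ^ n) N.

Definition cst (a : nat -> R) (m : nat) : R :=
  INR m - 1 - 2 * psum a (m - 1).

Definition hyp2 (a : nat -> R) (m : nat) : Prop :=
  (1 <= m)%nat /\ forall n : nat, (m <= n)%nat -> a n + a (S n) = 1.

Definition hyp3 (a : nat -> R) (m : nat) : Prop :=
  (1 <= m)%nat /\ forall i : nat, a (m + 2 * i)%nat + a (m + 2 * i + 1)%nat = 1.

(* Write y = x - k = sum_n a_n 2^-n.  The N-th rescaled remainder
   y_N = 2^N (y - sum_{n <= N} a_n 2^-n) is the point of [0,1] with binary digits
   a_{N+1}, a_{N+2}, ..., and s_N = N - 2 (a_1 + ... + a_N) is the slope of the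
   affine part of T on the dyadic interval of generation N around y.  Iterating the
   functional equation T z = phi z + T (2 z) / 2 gives the rescaling identity
       T (y + (v - y_N) 2^-N) - T y = (s_N (v - y_N) + T v - T y_N) 2^-N,  v in [0,1],
   so xi is a superdifferential of T at y iff, asymptotically in N, the function
   v |-> T v - T y_N - (xi - s_N) (v - y_N) is nonpositive on [0,1] up to o(|v - y_N|).
   - If y_N and s_N recur along N, N+2, N+4, ... (case (2): y_N = 1/3 or 2/3) this is
     an exact global inequality at the maximum points 1/3, 2/3 of T.
   - Testing at v = 1/3 and v = 2/3 forces xi - s_N to move towards 0, and once it is
     small the digits must pair up (a_{N+1} + a_{N+2} = 1) forever; since s_N changes
     by +-1 at each step this yields cases (3) and (4).
   - At a dyadic point the difference quotients at h = 2^-n grow like n: case (1). *)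

From Stdlib Require Import Reals Lra Lia ZArith ClassicalEpsilon.
Open Scope R_scope.

Lemma pow2_pos : forall n, 0 < 2 ^ n.
Proof. intro n; apply pow_lt; lra. Qed.

Lemma Rdiv_le_0_compat : forall a b, 0 <= a -> 0 < b -> 0 <= a / b.
Proof. intros a b Ha Hb. unfold Rdiv. apply Rmult_le_pos; [exact Ha|left; apply Rinv_0_lt_compat, Hb]. Qed.

Lemma cv_const : forall c, Un_cv (fun _ => c) c.
Proof.
  intros c eps Heps. exists 0%nat. intros n _. unfold R_dist.
  replace (c - c) with 0 by ring. rewrite Rabs_R0. lra.
Qed.

Lemma cv_upper_bound : forall u l B, Un_cv u l -> (forall n, u n <= B) -> l <= B.
Proof. intros u l B Hu HB. exact (Rle_cv_lim (Vn := fun _ => B) HB Hu (cv_const B)). Qed.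

Lemma cv_lower_bound : forall u l B, Un_cv u l -> (forall n, B <= u n) -> B <= l.
Proof. intros u l B Hu HB. exact (Rle_cv_lim (Un := fun _ => B) HB (cv_const B) Hu). Qed.

Lemma inv_pow2_small : forall d, 0 < d -> exists N, forall M, (N <= M)%nat -> / 2 ^ M < d.
Proof.
  intros d Hd. destruct (pow_lt_1_zero (/ 2)) with (y := d) as [N HN]; auto.
  { rewrite Rabs_right; lra. }
  exists N. intros M HM. specialize (HN M HM). rewrite pow_inv in HN.
  rewrite Rabs_right in HN; auto. left. apply Rinv_0_lt_compat, pow2_pos.
Qed.

Lemma nat_unbounded : forall r, exists n, r < INR n.
Proof.
  intro r. destruct (archimed r) as [H1 _]. destruct (Z_lt_le_dec (up r) 0) as [L|L].
  - exists 0%nat. apply IZR_lt in L. simpl. lra.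
  - exists (Z.to_nat (up r)). rewrite INR_IZR_INZ, Z2Nat.id by lia. lra.
Qed.

Lemma le_of_le_plus_eps : forall p q, (forall eps, 0 < eps < 1/2 -> p <= q + eps) -> p <= q.
Proof.
  intros p q H. destruct (Rle_dec p q) as [|Hn]; auto.
  specialize (H (Rmin ((p - q) / 2) (1/4))). unfold Rmin in H.
  destruct Rle_dec; specialize (H ltac:(lra)); lra.
Qed.

(* A bounded sequence growing geometrically with ratio r >= 2 vanishes identically;
   used to identify quantities that are invariant under two steps of the dynamics. *)
Lemma bounded_geometric_zero : forall (f : nat -> R) r B, 2 <= r ->
  (forall j, f (S j) = r * f j) -> (forall j, Rabs (f j) <= B) -> f 0%nat = 0.
Proof.
  intros f r B Hr Hrec Hbound.
  assert (Hgrow : forall j, 2 ^ j * Rabs (f 0%nat) <= B).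
  { intro j. assert (Hpow : f j = r ^ j * f 0%nat).
    { induction j as [|j IH]; simpl; [ring|]. rewrite Hrec, IH. ring. }
    specialize (Hbound j). rewrite Hpow, Rabs_mult, (Rabs_right (r ^ j)) in Hbound
      by (apply Rle_ge, pow_le; lra).
    assert (2 ^ j <= r ^ j) by (apply pow_incr; lra).
    pose proof (Rabs_pos (f 0%nat)). nra. }
  destruct (Req_dec (f 0%nat) 0) as [|Hne]; [assumption|exfalso].
  assert (Hpos : 0 < Rabs (f 0%nat)) by (apply Rabs_pos_lt; exact Hne).
  assert (HB : 0 <= B) by (specialize (Hgrow 0%nat); simpl in Hgrow; lra).
  destruct (inv_pow2_small (Rabs (f 0%nat) / (B + 1))) as [J HJ].
  { apply Rdiv_lt_0_compat; lra. }
  specialize (HJ J (le_n J)). specialize (Hgrow J). pose proof (pow2_pos J).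
  assert (Hscale : B + 1 < 2 ^ J * Rabs (f 0%nat)).
  { apply (Rmult_lt_compat_l (2 ^ J * (B + 1))) in HJ; [|nra].
    replace (2 ^ J * (B + 1) * / 2 ^ J) with (B + 1) in HJ by (field; lra).
    replace (2 ^ J * (B + 1) * (Rabs (f 0%nat) / (B + 1))) with (2 ^ J * Rabs (f 0%nat))
      in HJ by (field; lra).
    exact HJ. }
  lra.
Qed.

Lemma floorR_spec : forall z, IZR (floorR z) <= z < IZR (floorR z) + 1.
Proof.
  intro z; unfold floorR. destruct (archimed z) as [H1 H2].
  rewrite minus_IZR. simpl. lra.
Qed.

Lemma floorR_unique : forall z c, IZR c <= z < IZR c + 1 -> floorR z = c.
Proof.
  intros z c [H1 H2]. unfold floorR.
  assert (c + 1 = up z)%Z by (apply tech_up; rewrite plus_IZR; simpl; lra).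
  lia.
Qed.

Lemma floorR_translate : forall z c, floorR (z + IZR c) = (floorR z + c)%Z.
Proof.
  intros z c. apply floorR_unique. destruct (floorR_spec z).
  rewrite plus_IZR. lra.
Qed.

Lemma phi_translate : forall z c, phi (z + IZR c) = phi z.
Proof.
  intros z c. unfold phi. rewrite floorR_translate, plus_IZR.
  f_equal; ring.
Qed.

Lemma phi_unit_interval : forall v, 0 <= v <= 1 -> phi v = Rmin v (1 - v).
Proof.
  intros v Hv. destruct (Req_dec v 1) as [E|E].
  - subst. unfold phi. replace (floorR 1) with 1%Z.
    + simpl. unfold Rmin; repeat destruct Rle_dec; lra.
    + symmetry; apply floorR_unique; simpl; lra.
  - unfold phi. replace (floorR v) with 0%Z.
    + simpl. f_equal; ring.
    + symmetry; apply floorR_unique; simpl; lra.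
Qed.

Lemma phi_lo : forall v, 0 <= v <= 1/2 -> phi v = v.
Proof. intros v Hv. rewrite phi_unit_interval by lra. unfold Rmin; destruct Rle_dec; lra. Qed.

Lemma phi_hi : forall v, 1/2 <= v <= 1 -> phi v = 1 - v.
Proof. intros v Hv. rewrite phi_unit_interval by lra. unfold Rmin; destruct Rle_dec; lra. Qed.

Lemma phi_reduce : forall z, exists t, 0 <= t < 1 /\ phi z = phi t /\ z = t + IZR (floorR z).
Proof.
  intro z. exists (z - IZR (floorR z)). destruct (floorR_spec z).
  split; [lra|]. split; [|ring].
  rewrite <- (phi_translate (z - IZR (floorR z)) (floorR z)). f_equal; ring.
Qed.

Lemma phi_bounds : forall z, 0 <= phi z <= 1/2.
Proof.
  intro z. destruct (phi_reduce z) as [t [Ht [E _]]]. rewrite E, phi_unit_interval by lra.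
  unfold Rmin; destruct Rle_dec; lra.
Qed.

Lemma phi_le_dist : forall z c, phi z <= Rabs (z - IZR c).
Proof.
  intros z c. destruct (floorR_spec z) as [H1 H2]. unfold phi.
  destruct (Z_le_gt_dec c (floorR z)) as [L|L].
  - apply IZR_le in L. unfold Rmin; destruct Rle_dec; rewrite Rabs_right by lra; lra.
  - assert (L' : (floorR z + 1 <= c)%Z) by lia. apply IZR_le in L'.
    rewrite plus_IZR in L'. simpl in L'.
    unfold Rmin; destruct Rle_dec; rewrite Rabs_left1 by lra; lra.
Qed.

Lemma phi_attained : forall z, exists c, phi z = Rabs (z - IZR c).
Proof.
  intro z. destruct (floorR_spec z) as [H1 H2]. unfold phi.
  unfold Rmin; destruct Rle_dec.
  - exists (floorR z). rewrite Rabs_right by lra; ring.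
  - exists (floorR z + 1)%Z. rewrite plus_IZR. simpl. rewrite Rabs_left1 by lra. ring.
Qed.

Lemma phi_lipschitz : forall z t, 0 <= t -> phi z - t <= phi (z + t).
Proof.
  intros z t Ht. destruct (phi_attained (z + t)) as [c Hc].
  pose proof (phi_le_dist z c).
  assert (Rabs (z - IZR c) <= Rabs (z + t - IZR c) + t).
  { replace (z - IZR c) with ((z + t - IZR c) + - t) by ring.
    eapply Rle_trans; [apply Rabs_triang|]. rewrite Rabs_Ropp, (Rabs_right t) by lra. lra. }
  lra.
Qed.

Lemma phi_two_terms : forall z, phi z + phi (2 * z) / 2 <= 1/2.
Proof.
  intro z. destruct (phi_reduce z) as [t [Ht [E Ez]]]. rewrite E.
  assert (E2 : phi (2 * z) = phi (2 * t)).
  { rewrite Ez. replace (2 * (t + IZR (floorR z))) with (2 * t + IZR (2 * floorR z))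
      by (rewrite mult_IZR; simpl; ring).
    apply phi_translate. }
  rewrite E2, phi_unit_interval by lra.
  destruct (Rle_dec (2 * t) 1).
  - rewrite phi_unit_interval by lra. unfold Rmin; repeat destruct Rle_dec; lra.
  - replace (2 * t) with ((2 * t - 1) + IZR 1) by (simpl; ring).
    rewrite phi_translate, phi_unit_interval by lra. unfold Rmin; repeat destruct Rle_dec; lra.
Qed.

Lemma takagi_partial_cv : forall z, exists l, Un_cv (takagi_partial z) l.
Proof.
  intro z.
  assert (H : {l : R | Un_cv (fun N => sum_f_R0 (fun n => phi (2 ^ n * z) / 2 ^ n) N) l}).
  { apply (Rseries_CV_comp _ (fun n => 1 * (/ 2) ^ n)).
    - intro n. pose proof (pow2_pos n). pose proof (phi_bounds (2 ^ n * z)).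
      rewrite pow_inv, Rmult_1_l. unfold Rdiv.
      assert (0 < / 2 ^ n) by (apply Rinv_0_lt_compat; lra). split; nra.
    - exists (/ (1 - / 2)). apply GP_infinite. rewrite Rabs_right; lra. }
  destruct H as [l Hl]. exists l. exact Hl.
Qed.

Lemma T_spec : forall z, Un_cv (takagi_partial z) (T z).
Proof. intro z. unfold T. apply epsilon_spec, takagi_partial_cv. Qed.

Lemma takagi_partial_S : forall z n,
  takagi_partial z (S n) = phi z + takagi_partial (2 * z) n / 2.
Proof.
  intros z n. unfold takagi_partial. rewrite decomp_sum by lia. simpl pred.
  unfold Rdiv at 3. rewrite (Rmult_comm (sum_f_R0 _ n)), scal_sum.
  f_equal.
  - simpl. rewrite Rmult_1_l. unfold Rdiv. rewrite Rinv_1. ring.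
  - apply sum_eq. intros i _. pose proof (pow2_pos i). simpl.
    rewrite (Rmult_comm 2 (2 ^ i)), Rmult_assoc. field. lra.
Qed.

Lemma T_functional_eq : forall z, T z = phi z + T (2 * z) / 2.
Proof.
  intro z. apply (UL_sequence (fun n => takagi_partial z (S n))).
  - apply (Un_cv_ext (fun n => takagi_partial z (n + 1))).
    { intro n. rewrite Nat.add_1_r. reflexivity. }
    apply CV_shift', T_spec.
  - apply (Un_cv_ext (fun n => phi z + takagi_partial (2 * z) n * / 2)).
    { intro n. rewrite takagi_partial_S. reflexivity. }
    apply CV_plus; [apply cv_const|apply CV_mult; [apply T_spec|apply cv_const]].
Qed.

Lemma T_translate : forall z c, T (z + IZR c) = T z.
Proof.
  intros z c. apply (UL_sequence (takagi_partial (z + IZR c))); [apply T_spec|].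
  apply (Un_cv_ext (takagi_partial z)); [|apply T_spec].
  intro n. unfold takagi_partial. apply sum_eq. intros i _. f_equal.
  replace (2 ^ i * (z + IZR c)) with (2 ^ i * z + IZR (c * 2 ^ Z.of_nat i)).
  - symmetry. apply phi_translate.
  - rewrite mult_IZR, <- pow_IZR. ring.
Qed.

Lemma T_nonneg : forall z, 0 <= T z.
Proof.
  intro z. apply (cv_lower_bound _ _ 0 (T_spec z)). intro n.
  apply cond_pos_sum. intro i. pose proof (phi_bounds (2 ^ i * z)).
  apply Rdiv_le_0_compat; [lra|apply pow2_pos].
Qed.

Lemma takagi_partial_mono : forall z n p, takagi_partial z n <= takagi_partial z (n + p).
Proof.
  intros z n p. induction p as [|p IH].
  - rewrite Nat.add_0_r; lra.
  - rewrite Nat.add_succ_r. unfold takagi_partial in *. simpl.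
    pose proof (phi_bounds (2 * 2 ^ (n + p) * z)). pose proof (pow2_pos (n + p)).
    assert (0 <= phi (2 * 2 ^ (n + p) * z) / (2 * 2 ^ (n + p))) by (apply Rdiv_le_0_compat; lra).
    lra.
Qed.

Lemma takagi_partial_odd_bound : forall k z, takagi_partial z (2 * k + 1) <= 2/3.
Proof.
  induction k as [|k IH]; intro z.
  - unfold takagi_partial. simpl. pose proof (phi_two_terms z).
    replace (phi (1 * z) / 1) with (phi z) by (rewrite Rmult_1_l; field).
    rewrite Rmult_1_r. lra.
  - replace (2 * S k + 1)%nat with (S (S (2 * k + 1))) by lia.
    rewrite !takagi_partial_S. pose proof (phi_two_terms z). specialize (IH (2 * (2 * z))).
    lra.
Qed.

Lemma T_le_two_thirds : forall z, T z <= 2/3.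
Proof.
  intro z. apply (cv_upper_bound _ _ _ (T_spec z)). intro n.
  eapply Rle_trans; [apply (takagi_partial_mono z n (n + 1))|].
  replace (n + (n + 1))%nat with (2 * n + 1)%nat by lia. apply takagi_partial_odd_bound.
Qed.

Lemma T_plus1 : forall z, T (z + 1) = T z.
Proof. intro z. apply (T_translate z 1). Qed.

Lemma T_thirds : T (1/3) = 2/3 /\ T (2/3) = 2/3.
Proof.
  pose proof (T_functional_eq (1/3)) as E1. pose proof (T_functional_eq (2/3)) as E2.
  replace (2 * (1/3)) with (2/3) in E1 by field.
  replace (2 * (2/3)) with (1/3 + 1) in E2 by field. rewrite T_plus1 in E2.
  rewrite phi_lo in E1 by lra. rewrite phi_hi in E2 by lra. split; lra.
Qed.

Lemma T_sixths : T (1/6) = 1/2 /\ T (5/6) = 1/2.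
Proof.
  destruct T_thirds as [A B].
  pose proof (T_functional_eq (1/6)) as E1. pose proof (T_functional_eq (5/6)) as E2.
  replace (2 * (1/6)) with (1/3) in E1 by field.
  replace (2 * (5/6)) with (2/3 + 1) in E2 by field. rewrite T_plus1 in E2.
  rewrite phi_lo in E1 by lra. rewrite phi_hi in E2 by lra. split; lra.
Qed.

Lemma T_le_lo : forall v, 0 <= v <= 1/2 -> T v <= v + 1/3.
Proof. intros v Hv. rewrite T_functional_eq, phi_lo by lra. pose proof (T_le_two_thirds (2 * v)). lra. Qed.

Lemma T_le_hi : forall v, 1/2 <= v <= 1 -> T v <= 4/3 - v.
Proof. intros v Hv. rewrite T_functional_eq, phi_hi by lra. pose proof (T_le_two_thirds (2 * v)). lra. Qed.

Lemma T_support_third : forall c,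
  (forall v, 0 <= v <= 1 -> T v - T (1/3) <= c * (v - 1/3)) <-> 0 <= c <= 1.
Proof.
  intro c. destruct T_thirds as [T1 T2]. destruct T_sixths as [T3 _]. rewrite T1. split.
  - intro H. pose proof (H (2/3) ltac:(lra)) as H1. pose proof (H (1/6) ltac:(lra)) as H2.
    rewrite T2 in H1. rewrite T3 in H2. lra.
  - intros Hc v Hv. destruct (Rle_dec (1/3) v).
    + pose proof (T_le_two_thirds v). nra.
    + pose proof (T_le_lo v ltac:(lra)). nra.
Qed.

Lemma T_support_two_thirds : forall c,
  (forall v, 0 <= v <= 1 -> T v - T (2/3) <= c * (v - 2/3)) <-> -1 <= c <= 0.
Proof.
  intro c. destruct T_thirds as [T1 T2]. destruct T_sixths as [_ T4]. rewrite T2. split.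
  - intro H. pose proof (H (1/3) ltac:(lra)) as H1. pose proof (H (5/6) ltac:(lra)) as H2.
    rewrite T1 in H1. rewrite T4 in H2. lra.
  - intros Hc v Hv. destruct (Rle_dec v (2/3)).
    + pose proof (T_le_two_thirds v). nra.
    + pose proof (T_le_hi v ltac:(lra)). nra.
Qed.

Lemma dyadic_translate : forall x c, dyadic x -> dyadic (x + IZR c).
Proof.
  intros x c [k [j Hx]]. exists (k + c * 2 ^ Z.of_nat j)%Z, j.
  rewrite Hx, plus_IZR, mult_IZR, <- pow_IZR. field. apply pow_nonzero; lra.
Qed.

Lemma superdiff_T_translate : forall x c xi, superdiff T (x + IZR c) xi <-> superdiff T x xi.
Proof.
  intros x c xi.
  assert (Hdiff : forall h, T (x + IZR c + h) - T (x + IZR c) = T (x + h) - T x).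
  { intro h. replace (x + IZR c + h) with (x + h + IZR c) by ring. rewrite !T_translate. reflexivity. }
  split; intros H eps Heps; destruct (H eps Heps) as [d [Hd Hquot]]; exists d;
    split; try exact Hd; intros h Hh0 Hhd; specialize (Hquot h Hh0 Hhd).
  - rewrite <- Hdiff. exact Hquot.
  - rewrite Hdiff. exact Hquot.
Qed.

(** * Dyadic points: case (1) *)

Lemma T_zero : T 0 = 0.
Proof.
  pose proof (T_functional_eq 0) as E. rewrite Rmult_0_r, phi_lo in E by lra. lra.
Qed.

Lemma T_inv_pow2 : forall m, T (/ 2 ^ m) = INR m / 2 ^ m.
Proof.
  induction m as [|m IH].
  - simpl. rewrite Rinv_1. replace 1 with (0 + 1) by ring. rewrite T_plus1, T_zero. field.
  - pose proof (pow2_pos m). assert (Hpos : 0 < / 2 ^ S m) by apply Rinv_0_lt_compat, pow2_pos.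
    rewrite T_functional_eq, phi_lo.
    + replace (2 * / 2 ^ S m) with (/ 2 ^ m) by (simpl; field; lra).
      rewrite IH, S_INR. simpl. field. lra.
    + split; [lra|]. simpl. rewrite Rinv_mult.
      assert (/ 2 ^ m <= 1) by (rewrite <- Rinv_1; apply Rinv_le_contravar, pow_R1_Rle; lra).
      lra.
Qed.

Lemma T_increment_dyadic : forall j n z, (j <= n)%nat -> (exists c, z = IZR c / 2 ^ j) ->
  (INR n - 2 * INR j) / 2 ^ n <= T (z + / 2 ^ n) - T z.
Proof.
  induction j as [|j IH]; intros n z Hjn [c Hc].
  - simpl in Hc. replace z with (0 + IZR c) by (rewrite Hc; field).
    replace (0 + IZR c + / 2 ^ n) with (/ 2 ^ n + IZR c) by ring.
    rewrite !T_translate, T_zero, T_inv_pow2. right. simpl. field. apply pow_nonzero; lra.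
  - destruct n as [|n]; [lia|].
    pose proof (pow2_pos n).
    assert (Ht : 0 <= / 2 ^ S n) by (left; apply Rinv_0_lt_compat, pow2_pos).
    rewrite (T_functional_eq (z + / 2 ^ S n)), (T_functional_eq z).
    pose proof (phi_lipschitz z (/ 2 ^ S n) Ht).
    replace (2 * (z + / 2 ^ S n)) with (2 * z + / 2 ^ n) by (simpl; field; lra).
    assert (IH' : (INR n - 2 * INR j) / 2 ^ n <= T (2 * z + / 2 ^ n) - T (2 * z)).
    { apply IH; [lia|]. exists c. rewrite Hc. simpl. pose proof (pow2_pos j). field. lra. }
    assert (Eq : (INR (S n) - 2 * INR (S j)) / 2 ^ S n
               = - / 2 ^ S n + ((INR n - 2 * INR j) / 2 ^ n) / 2).
    { rewrite !S_INR. simpl. field. lra. }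
    rewrite Eq. lra.
Qed.

(* Case (1): the quotient at h = 2^-n exceeds n - 2j - xi, which is unbounded. *)
Lemma dyadic_no_superdiff : forall x xi, dyadic x -> ~ superdiff T x xi.
Proof.
  intros x xi [c [j Hx]] Hsd.
  destruct (Hsd 1 ltac:(lra)) as [d [Hd Hquot]].
  destruct (inv_pow2_small d Hd) as [N1 HN1].
  destruct (nat_unbounded (2 * INR j + xi + 1)) as [N2 HN2].
  set (n := (N1 + N2 + j)%nat).
  assert (Hn : INR N2 <= INR n) by (apply le_INR; unfold n; lia).
  pose proof (pow2_pos n).
  assert (Hh : 0 < / 2 ^ n) by (apply Rinv_0_lt_compat; lra).
  specialize (Hquot (/ 2 ^ n) ltac:(lra)).
  rewrite Rabs_right in Hquot by lra.
  specialize (Hquot (HN1 n ltac:(unfold n; lia))).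
  pose proof (T_increment_dyadic j n x ltac:(unfold n; lia) (ex_intro _ c Hx)) as Hinc.
  replace ((INR n - 2 * INR j) / 2 ^ n) with ((INR n - 2 * INR j) * / 2 ^ n) in Hinc
    by (unfold Rdiv; ring).
  assert (Q : INR n - 2 * INR j - xi <= (T (x + / 2 ^ n) - T x - xi * / 2 ^ n) / / 2 ^ n).
  { apply (Rmult_le_reg_r (/ 2 ^ n)); [exact Hh|]. unfold Rdiv.
    rewrite Rmult_assoc, Rinv_l, Rmult_1_r by lra. nra. }
  lra.
Qed.

Definition digits (a : nat -> R) : Prop := forall n, (1 <= n)%nat -> a n = 0 \/ a n = 1.

(* The slope N - 2 (a_1 + ... + a_N) of the affine part of the first N terms of the
   Takagi series on the dyadic interval of generation N determined by a_1, ..., a_N. *)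
Definition slope (a : nat -> R) (N : nat) : R := INR N - 2 * psum a N.

Definition pairs (a : nat -> R) (N : nat) : Prop :=
  forall j, a (S (N + 2 * j)) + a (S (S (N + 2 * j))) = 1.

Definition alternating (a : nat -> R) (N : nat) (b : R) : Prop :=
  forall j, a (S (N + 2 * j)) = b /\ a (S (S (N + 2 * j))) = 1 - b.

Lemma slope_S : forall a N, slope a (S N) = slope a N + 1 - 2 * a (S N).
Proof. intros. unfold slope. rewrite S_INR. simpl. ring. Qed.

Lemma cst_slope : forall a N, cst a (S N) = slope a N.
Proof. intros a N. unfold cst, slope. simpl (S N - 1)%nat. rewrite Nat.sub_0_r, S_INR. ring. Qed.

(* A complementary pair of digits leaves the slope unchanged. *)
Lemma slope_pairs : forall a N, pairs a N -> forall j, slope a (N + 2 * j) = slope a N.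
Proof.
  intros a N Hp j. induction j as [|j IH]; [rewrite Nat.add_0_r; reflexivity|].
  replace (N + 2 * S j)%nat with (S (S (N + 2 * j))) by lia.
  rewrite !slope_S. specialize (Hp j). lra.
Qed.

Lemma slope_pairs_same_parity : forall a N N1 p, pairs a N -> pairs a N1 ->
  (N1 + N = 2 * p)%nat -> slope a N1 = slope a N.
Proof.
  intros a N N1 p Hp Hp1 Hpar.
  rewrite <- (slope_pairs a N1 Hp1 N), <- (slope_pairs a N Hp p).
  f_equal. lia.
Qed.

(* Pairings at positions of both parities force the digits to alternate. *)
Lemma pairs_odd_offset_hyp2 : forall a N N1 p, pairs a N -> pairs a N1 ->
  (N1 + N = 2 * p + 1)%nat -> hyp2 a (S (N1 + N)).
Proof.
  intros a N N1 p Hp Hp1 Hpar. split; [lia|]. intros n Hn.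
  destruct (Nat.Even_or_Odd (n - S N)) as [[q Hq]|[q Hq]].
  - replace n with (S (N + 2 * q)) by lia. apply Hp.
  - destruct (Nat.Even_or_Odd (n - S N1)) as [[q' Hq']|[q' Hq']].
    + replace n with (S (N1 + 2 * q')) by lia. apply Hp1.
    + exfalso. lia.
Qed.

Lemma hyp3_pairs : forall a N, hyp3 a (S N) <-> pairs a N.
Proof.
  intros a N. split.
  - intros [_ H] j. specialize (H j).
    replace (S N + 2 * j)%nat with (S (N + 2 * j)) in H by lia.
    replace (S (N + 2 * j) + 1)%nat with (S (S (N + 2 * j))) in H by lia. exact H.
  - intro H. split; [lia|]. intro j. specialize (H j).
    replace (S N + 2 * j)%nat with (S (N + 2 * j)) by lia.
    replace (S (N + 2 * j) + 1)%nat with (S (S (N + 2 * j))) by lia. exact H.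
Qed.

Lemma hyp2_alternating : forall a N, hyp2 a (S N) -> alternating a N (a (S N)).
Proof.
  intros a N [_ H] j. induction j as [|j [E1 E2]].
  - rewrite Nat.add_0_r. split; [reflexivity|]. specialize (H (S N) (le_n _)). lra.
  - replace (N + 2 * S j)%nat with (S (S (N + 2 * j))) by lia.
    assert (E3 : a (S (S (S (N + 2 * j)))) = a (S N)).
    { specialize (H (S (S (N + 2 * j))) ltac:(lia)). lra. }
    split; [exact E3|]. specialize (H (S (S (S (N + 2 * j)))) ltac:(lia)). lra.
Qed.

Lemma alternating_hyp2 : forall a N b, alternating a N b -> hyp2 a (S N).
Proof.
  intros a N b Halt. split; [lia|]. intros n Hn.
  destruct (Nat.Even_or_Odd (n - S N)) as [[q Hq]|[q Hq]].
  - replace n with (S (N + 2 * q)) by lia. destruct (Halt q). lra.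
  - replace n with (S (S (N + 2 * q))) by lia. destruct (Halt q) as [_ E2].
    destruct (Halt (S q)) as [E1 _].
    replace (N + 2 * S q)%nat with (S (S (N + 2 * q))) in E1 by lia. lra.
Qed.

Lemma alternating_pairs : forall a N b, alternating a N b -> pairs a N.
Proof. intros a N b Halt j. destruct (Halt j). lra. Qed.

Lemma alternating_shift : forall a N b j, alternating a N b -> alternating a (N + 2 * j) b.
Proof.
  intros a N b j Halt i. replace (N + 2 * j + 2 * i)%nat with (N + 2 * (j + i))%nat by lia.
  apply Halt.
Qed.

(** * Binary expansions and the rescaling identity *)

(* The N-th rescaled remainder 2^N (y - sum_{n <= N} a_n 2^-n) of y: the point of [0,1]
   whose binary digits are a_{N+1}, a_{N+2}, ... *)
Definition remainder (a : nat -> R) (y : R) (N : nat) : R := 2 ^ N * (y - bin_partial a N).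

Lemma remainder_0 : forall a y, remainder a y 0 = y.
Proof. intros. unfold remainder, bin_partial. simpl. ring. Qed.

Lemma remainder_S : forall a y N, remainder a y (S N) = 2 * remainder a y N - a (S N).
Proof.
  intros. unfold remainder, bin_partial. simpl psum. pose proof (pow2_pos N). simpl. field. lra.
Qed.

Section BinaryExpansion.

Variables (a : nat -> R) (y : R).
Hypothesis Hdig : digits a.
Hypothesis Hcv : Un_cv (bin_partial a) y.

Lemma bin_partial_tail : forall N p,
  0 <= bin_partial a (p + N) - bin_partial a N <= / 2 ^ N - / 2 ^ (p + N).
Proof.
  intros N p. induction p as [|p IH]; [simpl; lra|].
  change (bin_partial a (S p + N)) with (bin_partial a (p + N) + a (S (p + N)) / 2 ^ S (p + N)).
  assert (Hd : 0 <= a (S (p + N)) <= 1) by (destruct (Hdig (S (p + N))) as [E|E]; lia || lra).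
  pose proof (pow2_pos (p + N)).
  assert (E2 : / 2 ^ S (p + N) = / 2 ^ (p + N) / 2) by (simpl; field; lra).
  assert (0 < / 2 ^ S (p + N)) by (apply Rinv_0_lt_compat, pow2_pos).
  assert (0 <= a (S (p + N)) / 2 ^ S (p + N) <= / 2 ^ S (p + N)) by (unfold Rdiv; nra).
  simpl (S p + N)%nat. rewrite E2 in *. lra.
Qed.

Lemma remainder_range : forall N, 0 <= remainder a y N <= 1.
Proof.
  intro N. pose proof (pow2_pos N).
  assert (Htail : Un_cv (fun p => bin_partial a (p + N) - bin_partial a N) (y - bin_partial a N))
    by (apply CV_minus; [apply CV_shift', Hcv|apply cv_const]).
  assert (0 <= y - bin_partial a N <= / 2 ^ N).
  { split; [apply (cv_lower_bound _ _ _ Htail)|apply (cv_upper_bound _ _ _ Htail)];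
      intro p; pose proof (bin_partial_tail N p) as Hp;
      pose proof (Rinv_0_lt_compat _ (pow2_pos (p + N))); lra. }
  unfold remainder. split; [apply Rmult_le_pos; lra|].
  replace 1 with (2 ^ N * / 2 ^ N) by (field; lra). apply Rmult_le_compat_l; lra.
Qed.

Lemma bin_partial_dyadic : forall N, exists c, bin_partial a N = IZR c / 2 ^ N.
Proof.
  induction N as [|N [c Hc]]; [exists 0%Z; unfold bin_partial; simpl; field|].
  change (bin_partial a (S N)) with (bin_partial a N + a (S N) / 2 ^ S N).
  rewrite Hc. pose proof (pow2_pos N).
  destruct (Hdig (S N)) as [E|E]; [lia| |]; rewrite E.
  - exists (2 * c)%Z. rewrite mult_IZR. simpl. field. lra.
  - exists (2 * c + 1)%Z. rewrite plus_IZR, mult_IZR. simpl. field. lra.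
Qed.

Lemma remainder_open : ~ dyadic y -> forall N, 0 < remainder a y N < 1.
Proof.
  intros Hnd N. destruct (remainder_range N) as [H1 H2].
  destruct (bin_partial_dyadic N) as [c Hc]. pose proof (pow2_pos N).
  unfold remainder in *. rewrite Hc in *. split.
  - destruct H1 as [|H1]; [assumption|]. exfalso. apply Hnd. exists c, N.
    destruct (Rmult_integral _ _ (eq_sym H1)); lra.
  - destruct H2 as [|H2]; [assumption|]. exfalso. apply Hnd. exists (c + 1)%Z, N.
    assert (y - IZR c / 2 ^ N = / 2 ^ N)
      by (apply (Rmult_eq_reg_l (2 ^ N)); [rewrite H2; field|]; lra).
    rewrite plus_IZR. replace ((IZR c + 1) / 2 ^ N) with (IZR c / 2 ^ N + / 2 ^ N) by (field; lra).
    lra.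
Qed.

Lemma digit_step : forall N,
  (a (S N) = 0 /\ remainder a y N <= 1/2 /\ remainder a y (S N) = 2 * remainder a y N) \/
  (a (S N) = 1 /\ 1/2 <= remainder a y N /\ remainder a y (S N) = 2 * remainder a y N - 1).
Proof.
  intro N. pose proof (remainder_range (S N)). rewrite remainder_S in *.
  destruct (Hdig (S N)) as [E|E]; [lia| |]; rewrite E in *; [left|right]; repeat split; lra.
Qed.

Lemma T_half_difference : forall b u v, (b = 0 \/ b = 1) ->
  b / 2 <= u <= (1 + b) / 2 -> b / 2 <= v <= (1 + b) / 2 ->
  T v - T u = (1 - 2 * b) * (v - u) + (T (2 * v - b) - T (2 * u - b)) / 2.
Proof.
  intros b u v Hb Hu Hv. rewrite (T_functional_eq u), (T_functional_eq v).
  destruct Hb as [-> | ->].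
  - rewrite (phi_lo u), (phi_lo v) by lra.
    replace (2 * u - 0) with (2 * u) by ring. replace (2 * v - 0) with (2 * v) by ring. lra.
  - rewrite (phi_hi u), (phi_hi v) by lra.
    rewrite <- (T_plus1 (2 * u - 1)), <- (T_plus1 (2 * v - 1)).
    replace (2 * u - 1 + 1) with (2 * u) by ring. replace (2 * v - 1 + 1) with (2 * v) by ring. lra.
Qed.

Lemma T_rescaling : forall N v, 0 <= v <= 1 ->
  T (y + (v - remainder a y N) / 2 ^ N) - T y =
  (slope a N * (v - remainder a y N) + T v - T (remainder a y N)) / 2 ^ N.
Proof.
  induction N as [|N IH]; intros w Hw.
  - rewrite remainder_0. replace (y + (w - y) / 2 ^ 0) with w by (simpl; field).
    unfold slope. simpl. field.
  - pose proof (remainder_range N) as Hu. pose proof (pow2_pos N).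
    assert (Hb : a (S N) = 0 \/ a (S N) = 1) by (apply Hdig; lia).
    assert (Hhalf : a (S N) / 2 <= remainder a y N <= (1 + a (S N)) / 2)
      by (destruct (digit_step N); lra).
    pose proof (remainder_S a y N) as Hnext.
    remember ((w + a (S N)) / 2) as v eqn:Hv_def.
    assert (Hv : a (S N) / 2 <= v <= (1 + a (S N)) / 2) by (subst v; lra).
    replace (y + (w - remainder a y (S N)) / 2 ^ S N) with (y + (v - remainder a y N) / 2 ^ N)
      by (rewrite Hnext, Hv_def; simpl; field; lra).
    rewrite (IH v) by (destruct Hb; lra).
    pose proof (T_half_difference (a (S N)) (remainder a y N) v Hb Hhalf Hv) as Hdiff.
    replace (2 * v - a (S N)) with w in Hdiff by (subst v; field).
    replace (T v) with (T (remainder a y N) + (1 - 2 * a (S N)) * (v - remainder a y N)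
      + (T w - T (2 * remainder a y N - a (S N))) / 2) by lra.
    rewrite slope_S, Hnext, Hv_def. simpl. field. lra.
Qed.

Lemma rescaled_quotient : forall xi N v, v <> remainder a y N -> 0 <= v <= 1 ->
  (T (y + (v - remainder a y N) / 2 ^ N) - T y - xi * ((v - remainder a y N) / 2 ^ N))
    / Rabs ((v - remainder a y N) / 2 ^ N)
  = (T v - T (remainder a y N) - (xi - slope a N) * (v - remainder a y N))
    / Rabs (v - remainder a y N).
Proof.
  intros xi N v Hne Hv. pose proof (pow2_pos N).
  assert (0 < Rabs (v - remainder a y N)) by (apply Rabs_pos_lt; lra).
  rewrite (T_rescaling N v Hv). unfold Rdiv at 3 4.
  rewrite Rabs_mult, Rabs_inv, (Rabs_right (2 ^ N)) by lra.
  field. split; lra.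
Qed.

Lemma superdiff_remainder_bound : forall xi, superdiff T y xi -> forall eps, 0 < eps ->
  exists N0, forall N, (N0 <= N)%nat -> forall v, 0 <= v <= 1 ->
    T v - T (remainder a y N) <=
    (xi - slope a N) * (v - remainder a y N) + eps * Rabs (v - remainder a y N).
Proof.
  intros xi Hsd eps Heps.
  destruct (Hsd eps Heps) as [d [Hd Hquot]].
  destruct (inv_pow2_small d Hd) as [N0 HN0]. exists N0. intros N HN v Hv.
  pose proof (remainder_range N). pose proof (Rinv_0_lt_compat _ (pow2_pos N)).
  destruct (Req_dec v (remainder a y N)) as [Heq | Hne].
  { rewrite Heq. replace (remainder a y N - remainder a y N) with 0 by ring.
    rewrite Rabs_R0. lra. }
  assert (Hvu : 0 < Rabs (v - remainder a y N) <= 1)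
    by (split; [apply Rabs_pos_lt; lra | apply Rabs_le; lra]).
  assert (Hh : Rabs ((v - remainder a y N) / 2 ^ N) = Rabs (v - remainder a y N) * / 2 ^ N)
    by (unfold Rdiv; rewrite Rabs_mult, Rabs_inv, (Rabs_right (2 ^ N)) by (apply Rle_ge, pow_le; lra);
        reflexivity).
  specialize (Hquot ((v - remainder a y N) / 2 ^ N)).
  rewrite rescaled_quotient in Hquot by assumption.
  set (Q := T v - T (remainder a y N) - (xi - slope a N) * (v - remainder a y N)) in *.
  assert (HQ : Q / Rabs (v - remainder a y N) <= eps).
  { apply Hquot.
    - intro E. rewrite E, Rabs_R0 in Hh. nra.
    - rewrite Hh. specialize (HN0 N HN). nra. }
  assert (Q = Q / Rabs (v - remainder a y N) * Rabs (v - remainder a y N)) by (field; lra).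
  unfold Q in *. nra.
Qed.

Lemma superdiff_of_remainder_bound : forall xi N, 0 < remainder a y N < 1 ->
  (forall v, 0 <= v <= 1 ->
     T v - T (remainder a y N) <= (xi - slope a N) * (v - remainder a y N)) ->
  superdiff T y xi.
Proof.
  intros xi N Hu Hbound eps Heps. pose proof (pow2_pos N).
  set (m := Rmin (remainder a y N) (1 - remainder a y N)).
  assert (Hm : 0 < m <= remainder a y N /\ m <= 1 - remainder a y N)
    by (unfold m; split; [split; [apply Rmin_glb_lt|apply Rmin_l]|apply Rmin_r]; lra).
  exists (m / 2 ^ N). split; [apply Rdiv_lt_0_compat; lra|].
  intros h Hh0 Hhd. apply Rabs_def2 in Hhd.
  assert (Hscale : 2 ^ N * (m / 2 ^ N) = m) by (field; lra).
  remember (remainder a y N + 2 ^ N * h) as v eqn:Hv_def.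
  assert (Hv : 0 <= v <= 1) by (subst v; nra).
  assert (Hne : v <> remainder a y N).
  { subst v. intro E. apply Hh0. apply (Rmult_eq_reg_l (2 ^ N)); lra. }
  replace h with ((v - remainder a y N) / 2 ^ N) by (subst v; field; lra).
  rewrite rescaled_quotient by assumption.
  specialize (Hbound v Hv).
  assert (0 < / Rabs (v - remainder a y N)) by (apply Rinv_0_lt_compat, Rabs_pos_lt; lra).
  unfold Rdiv. nra.
Qed.

Lemma superdiff_recurrent_bound : forall xi u s, superdiff T y xi ->
  (forall N0, exists N, (N0 <= N)%nat /\ remainder a y N = u /\ slope a N = s) ->
  forall v, 0 <= v <= 1 -> T v - T u <= (xi - s) * (v - u).
Proof.
  intros xi u s Hsd Hrec v Hv. apply le_of_le_plus_eps. intros eps Heps.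
  destruct (superdiff_remainder_bound xi Hsd eps ltac:(lra)) as [N0 HN0].
  destruct (Hrec N0) as [N [HN [Hu Hs]]].
  pose proof (remainder_range N) as Hr. specialize (HN0 N HN v Hv). rewrite Hu, Hs in *.
  assert (Rabs (v - u) <= 1) by (apply Rabs_le; lra).
  nra.
Qed.

Lemma superdiff_iff_periodic_bound : ~ dyadic y -> forall N u s xi,
  (forall j, remainder a y (N + 2 * j) = u /\ slope a (N + 2 * j) = s) ->
  superdiff T y xi <-> (forall v, 0 <= v <= 1 -> T v - T u <= (xi - s) * (v - u)).
Proof.
  intros Hnd N u s xi Hper.
  destruct (Hper 0%nat) as [Hu Hs]. rewrite Nat.add_0_r in Hu, Hs. split.
  - intro Hsd. apply (superdiff_recurrent_bound xi u s Hsd).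
    intro N0. exists (N + 2 * N0)%nat. split; [lia | apply Hper].
  - intro Hbound. apply (superdiff_of_remainder_bound xi N (remainder_open Hnd N)).
    rewrite Hu, Hs. exact Hbound.
Qed.

Lemma remainder_alternating : forall N b, alternating a N b -> remainder a y N = (1 + b) / 3.
Proof.
  intros N b Halt.
  assert (Hb : b = 0 \/ b = 1).
  { destruct (Halt 0%nat) as [Hb _]. rewrite Nat.add_0_r in Hb. rewrite <- Hb. apply Hdig; lia. }
  set (f := fun j => remainder a y (N + 2 * j) - (1 + b) / 3).
  assert (Hf0 : f 0%nat = 0).
  { apply (bounded_geometric_zero f 4 1); [lra| |].
    - intro j. unfold f. replace (N + 2 * S j)%nat with (S (S (N + 2 * j))) by lia.
      rewrite !remainder_S. destruct (Halt j) as [E1 E2]. rewrite E1, E2. field.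
    - intro j. unfold f. pose proof (remainder_range (N + 2 * j)).
      apply Rabs_le. destruct Hb; subst b; lra. }
  unfold f in Hf0. rewrite Nat.add_0_r in Hf0. lra.
Qed.

Lemma hyp2_periodic : forall N, hyp2 a (S N) -> forall j,
  remainder a y (N + 2 * j) = (1 + a (S N)) / 3 /\ slope a (N + 2 * j) = slope a N.
Proof.
  intros N H2 j. pose proof (hyp2_alternating a N H2) as Halt. split.
  - apply remainder_alternating, alternating_shift, Halt.
  - apply slope_pairs, (alternating_pairs a N (a (S N))), Halt.
Qed.

Lemma remainder_third_step : forall n, remainder a y n = 1/3 ->
  a (S n) = 0 /\ a (S (S n)) = 1 /\ remainder a y (S (S n)) = 1/3.
Proof.
  intros n Hn.
  destruct (digit_step n) as [[H0 [_ H1]] | [_ [Hhalf _]]]; [|lra].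
  destruct (digit_step (S n)) as [[_ [Hhalf _]] | [H2 [_ H3]]]; [lra|].
  repeat split; lra.
Qed.

Lemma remainder_third_hyp2 : forall N, remainder a y N = 1/3 -> hyp2 a (S N).
Proof.
  intros N HN. apply (alternating_hyp2 a N 0).
  assert (Hall : forall j, remainder a y (N + 2 * j) = 1/3).
  { induction j as [|j IH]; [rewrite Nat.add_0_r; exact HN|].
    replace (N + 2 * S j)%nat with (S (S (N + 2 * j))) by lia.
    apply remainder_third_step, IH. }
  intro j. destruct (remainder_third_step _ (Hall j)) as [H0 [H1 _]]. split; lra.
Qed.

Lemma T_remainder_step : forall N,
  T (remainder a y N) = phi (remainder a y N) + T (remainder a y (S N)) / 2.
Proof.
  intro N. rewrite (T_functional_eq (remainder a y N)), remainder_S.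
  destruct (Hdig (S N)) as [E | E]; [lia | |]; rewrite E.
  - replace (2 * remainder a y N - 0) with (2 * remainder a y N) by ring. reflexivity.
  - rewrite <- (T_plus1 (2 * remainder a y N - 1)).
    replace (2 * remainder a y N - 1 + 1) with (2 * remainder a y N) by ring. reflexivity.
Qed.

Lemma T_remainder_pair_step : forall n, a (S n) + a (S (S n)) = 1 ->
  T (remainder a y n) = 1/2 + T (remainder a y (S (S n))) / 4.
Proof.
  intros n Hpair.
  rewrite (T_remainder_step n), (T_remainder_step (S n)).
  pose proof (remainder_range n). pose proof (remainder_range (S n)).
  destruct (digit_step n) as [[E1 [H1 H2]] | [E1 [H1 H2]]];
  destruct (digit_step (S n)) as [[E2 [H3 H4]] | [E2 [H3 H4]]]; try lra.
  - rewrite (phi_lo (remainder a y n)), (phi_hi (remainder a y (S n))) by lra. lra.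
  - rewrite (phi_hi (remainder a y n)), (phi_lo (remainder a y (S n))) by lra. lra.
Qed.

Lemma T_remainder_pairs : forall N, pairs a N -> T (remainder a y N) = 2/3.
Proof.
  intros N Hp.
  set (f := fun j => T (remainder a y (N + 2 * j)) - 2/3).
  assert (Hf0 : f 0%nat = 0).
  { apply (bounded_geometric_zero f 4 1); [lra| |].
    - intro j. unfold f. replace (N + 2 * S j)%nat with (S (S (N + 2 * j))) by lia.
      rewrite (T_remainder_pair_step (N + 2 * j) (Hp j)). lra.
    - intro j. unfold f. pose proof (T_nonneg (remainder a y (N + 2 * j))).
      pose proof (T_le_two_thirds (remainder a y (N + 2 * j))). apply Rabs_le. lra. }
  unfold f in Hf0. rewrite Nat.add_0_r in Hf0. lra.
Qed.

(** * Testing at the maximum points 1/3 and 2/3 *)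

(* From index N0 on, the asymptotic bound of [superdiff_remainder_bound] holds at the
   test points v = 2/3 and v = 1/3 (where T = 2/3). *)
Definition passes_tests (xi eps : R) (N0 : nat) : Prop :=
  forall N, (N0 <= N)%nat ->
    (remainder a y N < 2/3 -> - eps <= xi - slope a N) /\
    (1/3 < remainder a y N -> xi - slope a N <= eps).

Lemma tests_of_superdiff : forall xi eps, superdiff T y xi -> 0 < eps ->
  exists N0, passes_tests xi eps N0.
Proof.
  intros xi eps Hsd Heps.
  destruct (superdiff_remainder_bound xi Hsd eps Heps) as [N0 HN0]. exists N0.
  intros N HN. destruct T_thirds as [T1 T2].
  pose proof (T_le_two_thirds (remainder a y N)).
  pose proof (HN0 N HN (1/3) ltac:(lra)) as Hthird. pose proof (HN0 N HN (2/3) ltac:(lra)) as Htwo.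
  rewrite T1 in Hthird. rewrite T2 in Htwo.
  split; intro Hu.
  - rewrite Rabs_right in Htwo by lra. nra.
  - rewrite Rabs_left1 in Hthird by lra. nra.
Qed.

Section Tests.

Variables (xi eps : R) (N0 : nat).
Hypothesis Heps : 0 < eps < 1/2.
Hypothesis Htests : passes_tests xi eps N0.

(* Above the tolerance, the next digit must be 0 and lowers xi - s_N by 1 ... *)
Lemma test_above : forall N, (N0 <= N)%nat -> eps < xi - slope a N ->
  a (S N) = 0 /\ remainder a y N <= 1/3.
Proof.
  intros N HN Hgt. destruct (Htests N HN) as [_ Hhi].
  assert (Hu : remainder a y N <= 1/3).
  { destruct (Rle_dec (remainder a y N) (1/3)) as [|Hn]; [assumption|].
    specialize (Hhi ltac:(lra)). lra. }
  destruct (digit_step N) as [[E _] | [_ [Hhalf _]]]; [split; assumption | lra].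
Qed.

(* ... and below it, the next digit must be 1 and raises xi - s_N by 1. *)
Lemma test_below : forall N, (N0 <= N)%nat -> xi - slope a N < - eps ->
  a (S N) = 1 /\ 2/3 <= remainder a y N.
Proof.
  intros N HN Hlt. destruct (Htests N HN) as [Hlo _].
  assert (Hu : 2/3 <= remainder a y N).
  { destruct (Rle_dec (2/3) (remainder a y N)) as [|Hn]; [assumption|].
    specialize (Hlo ltac:(lra)). lra. }
  destruct (digit_step N) as [[_ [Hhalf _]] | [E _]]; [lra | split; assumption].
Qed.

Lemma test_inside : forall N, (N0 <= N)%nat -> - eps <= xi - slope a N <= eps ->
  a (S N) + a (S (S N)) = 1 /\ - eps <= xi - slope a (S (S N)) <= eps.
Proof.
  intros N HN Hin.
  assert (HN' : (N0 <= S N)%nat) by lia.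
  pose proof (slope_S a N). pose proof (slope_S a (S N)).
  destruct (Hdig (S N)) as [E | E]; [lia | |].
  - destruct (test_below (S N) HN') as [E' _]; [lra | split; lra].
  - destruct (test_above (S N) HN') as [E' _]; [lra | split; lra].
Qed.

Lemma test_inside_pairs : forall N, (N0 <= N)%nat -> - eps <= xi - slope a N <= eps -> pairs a N.
Proof.
  intros N HN Hin.
  assert (Hall : forall j, - eps <= xi - slope a (N + 2 * j) <= eps).
  { induction j as [|j IH]; [rewrite Nat.add_0_r; exact Hin|].
    replace (N + 2 * S j)%nat with (S (S (N + 2 * j))) by lia.
    exact (proj2 (test_inside (N + 2 * j) ltac:(lia) IH)). }
  intro j. exact (proj1 (test_inside (N + 2 * j) ltac:(lia) (Hall j))).
Qed.

Lemma test_descent : ~ (exists m, hyp2 a m) -> forall K N, (N0 <= N)%nat ->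
  eps < xi - slope a N <= INR K \/ - INR K <= xi - slope a N < - eps ->
  exists N1, (N <= N1)%nat /\ - eps <= xi - slope a N1 <= eps.
Proof.
  intros Hno2. induction K as [|K IH]; intros N HN Hout; [simpl in Hout; lra|].
  rewrite S_INR in Hout.
  assert (HN' : (N0 <= S N)%nat) by lia.
  pose proof (slope_S a N) as Hs. pose proof (remainder_S a y N) as Hr.
  destruct (Rle_dec (- eps) (xi - slope a (S N))) as [Hlo | Hlo];
    [destruct (Rle_dec (xi - slope a (S N)) eps) as [Hhi | Hhi] |].
  - exists (S N). split; [lia | lra].
  - destruct Hout as [Hout | Hout].
    + destruct (test_above N HN ltac:(lra)) as [E _].
      destruct (IH (S N) HN') as [N1 [HN1 Hin]]; [left; lra|].
      exists N1. split; [lia | exact Hin].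
    + destruct (test_below N HN ltac:(lra)) as [E Hu].
      destruct (test_above (S N) HN' ltac:(lra)) as [_ Hu'].
      exfalso. apply Hno2. exists (S (S N)). apply remainder_third_hyp2. lra.
  - destruct Hout as [Hout | Hout].
    + destruct (test_above N HN ltac:(lra)) as [E Hu].
      destruct (test_below (S N) HN' ltac:(lra)) as [_ Hu'].
      exfalso. apply Hno2. exists (S N). apply remainder_third_hyp2. lra.
    + destruct (test_below N HN ltac:(lra)) as [E _].
      destruct (IH (S N) HN') as [N1 [HN1 Hin]]; [right; lra|].
      exists N1. split; [lia | exact Hin].
Qed.

Lemma tests_pairs : ~ (exists m, hyp2 a m) ->
  exists N1, pairs a N1 /\ - eps <= xi - slope a N1 <= eps.
Proof.
  intros Hno2.
  assert (Hin : exists N1, (N0 <= N1)%nat /\ - eps <= xi - slope a N1 <= eps).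
  { destruct (nat_unbounded (Rabs (xi - slope a N0))) as [K HK].
    assert (Hbound : - INR K <= xi - slope a N0 <= INR K)
      by (unfold Rabs in HK; destruct (Rcase_abs _) in HK; lra).
    destruct (Rle_dec (- eps) (xi - slope a N0)); [destruct (Rle_dec (xi - slope a N0) eps)|].
    - exists N0. split; [lia | lra].
    - destruct (test_descent Hno2 K N0 (Nat.le_refl N0)) as [N1 [HN1 Hin]]; [left; lra|].
      exists N1. split; [exact HN1 | exact Hin].
    - destruct (test_descent Hno2 K N0 (Nat.le_refl N0)) as [N1 [HN1 Hin]]; [right; lra|].
      exists N1. split; [exact HN1 | exact Hin]. }
  destruct Hin as [N1 [HN1 Hin]]. exists N1. split; [exact (test_inside_pairs N1 HN1 Hin) | exact Hin].
Qed.

End Tests.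

Lemma superdiff_pairs : forall xi eps, superdiff T y xi -> ~ (exists m, hyp2 a m) ->
  0 < eps < 1/2 -> exists N, pairs a N /\ - eps <= xi - slope a N <= eps.
Proof.
  intros xi eps Hsd Hno2 Heps.
  destruct (tests_of_superdiff xi eps Hsd (proj1 Heps)) as [N0 Htests].
  exact (tests_pairs xi eps N0 Heps Htests Hno2).
Qed.

Lemma superdiff_case2_digit0 : ~ dyadic y -> forall N xi, hyp2 a (S N) -> a (S N) = 0 ->
  superdiff T y xi <-> slope a N <= xi <= slope a N + 1.
Proof.
  intros Hnd N xi H2 Hdigit.
  rewrite (superdiff_iff_periodic_bound Hnd N (1/3) (slope a N) xi), T_support_third.
  - split; intro; lra.
  - intro j. destruct (hyp2_periodic N H2 j) as [Hu Hs]. rewrite Hdigit in Hu.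
    split; [rewrite Hu; field | exact Hs].
Qed.

Lemma superdiff_case2_digit1 : ~ dyadic y -> forall N xi, hyp2 a (S N) -> a (S N) = 1 ->
  superdiff T y xi <-> slope a N - 1 <= xi <= slope a N.
Proof.
  intros Hnd N xi H2 Hdigit.
  rewrite (superdiff_iff_periodic_bound Hnd N (2/3) (slope a N) xi), T_support_two_thirds.
  - split; intro; lra.
  - intro j. destruct (hyp2_periodic N H2 j) as [Hu Hs]. rewrite Hdigit in Hu.
    split; [rewrite Hu; field | exact Hs].
Qed.

Lemma superdiff_case3 : ~ dyadic y -> ~ (exists m, hyp2 a m) -> forall N xi, pairs a N ->
  superdiff T y xi <-> xi = slope a N.
Proof.
  intros Hnd Hno2 N xi Hp. split.
  - intro Hsd.
    assert (Hclose : forall eps, 0 < eps < 1/2 -> - eps <= xi - slope a N <= eps).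
    { intros eps Heps. destruct (superdiff_pairs xi eps Hsd Hno2 Heps) as [N1 [Hp1 Hin]].
      destruct (Nat.Even_or_Odd (N1 + N)) as [[p Hpar] | [p Hpar]].
      - rewrite <- (slope_pairs_same_parity a N N1 p Hp Hp1 Hpar). exact Hin.
      - exfalso. apply Hno2. exists (S (N1 + N)). exact (pairs_odd_offset_hyp2 a N N1 p Hp Hp1 Hpar). }
    apply Rle_antisym; apply le_of_le_plus_eps; intros eps Heps; pose proof (Hclose eps Heps); lra.
  - intros ->. apply (superdiff_of_remainder_bound (slope a N) N (remainder_open Hnd N)).
    intros v Hv. rewrite (T_remainder_pairs N Hp). pose proof (T_le_two_thirds v). lra.
Qed.

End BinaryExpansion.

Theorem theorem2p6 :
  forall (x : R) (k : Z) (a : nat -> R),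
    (forall n : nat, (1 <= n)%nat -> a n = 0 \/ a n = 1) ->
    Un_cv (bin_partial a) (x - IZR k) ->
    (* (1) *)
    (dyadic x -> forall xi : R, ~ superdiff T x xi) /\
    (* (2) *)
    (forall m : nat, ~ dyadic x -> hyp2 a m ->
       (a m = 0 -> forall xi : R,
          superdiff T x xi <-> (cst a m <= xi <= cst a m + 1)) /\
       (a m = 1 -> forall xi : R,
          superdiff T x xi <-> (cst a m - 1 <= xi <= cst a m))) /\
    (* (3) *)
    (forall m : nat, ~ dyadic x -> (~ exists m', hyp2 a m') -> hyp3 a m ->
       forall xi : R, superdiff T x xi <-> xi = cst a m) /\
    (* (4) *)
    (~ dyadic x -> (~ exists m', hyp2 a m') -> (~ exists m', hyp3 a m') ->
       forall xi : R, ~ superdiff T x xi).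
Proof.
  intros x k a Hdig Hcv.
  (* Reduce to the fractional part y = x - k, whose binary digits are the a_n. *)
  set (y := x - IZR k) in Hcv.
  assert (Hx : x = y + IZR k) by (unfold y; ring).
  clearbody y. subst x.
  assert (Hnd : ~ dyadic (y + IZR k) -> ~ dyadic y) by (intros Hndx Hd; apply Hndx, dyadic_translate, Hd).
  split; [|split; [|split]].
  - intros Hd xi. apply dyadic_no_superdiff, Hd.
  - intros [|N] Hndx H2; [destruct H2; lia|]. rewrite cst_slope.
    split; intros Hdigit xi; rewrite superdiff_T_translate.
    + exact (superdiff_case2_digit0 a y Hdig Hcv (Hnd Hndx) N xi H2 Hdigit).
    + exact (superdiff_case2_digit1 a y Hdig Hcv (Hnd Hndx) N xi H2 Hdigit).
  - intros [|N] Hndx Hno2 H3 xi; [destruct H3; lia|]. rewrite cst_slope, superdiff_T_translate.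
    exact (superdiff_case3 a y Hdig Hcv (Hnd Hndx) Hno2 N xi (proj1 (hyp3_pairs a N) H3)).
  - intros _ Hno2 Hno3 xi Hsd. rewrite superdiff_T_translate in Hsd.
    destruct (superdiff_pairs a y Hdig Hcv xi (1/4) Hsd Hno2 ltac:(lra)) as [N [Hp _]].
    apply Hno3. exists (S N). apply hyp3_pairs, Hp.
Qed.
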